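(* Let $R$ be a finite commutative local Frobenius ring with residue field $\mathbb{F}_q$. Let $\{C_1,C_2\}$ be a pair of linear codes over $R$ of length $n$ such that $C_1+C_2=R^n$. If $\{C_1,C_2\}$ is a $0$-DLIP, then $C_1$ and $C_2$ are free.
   Context: A linear code of length $n$ over $R$ is an $R$-submodule of $R^n$; it is free if it is a free $R$-module. $\dim(C):=\log_q|C|$, and a pair $\{C,D\}$ is a $0$-DLIP if $\dim(C\cap D)=0$, i.e. $C\cap D=\{\mathbf{0}\}$. *)

From HB Require Import structures.
From mathcomp Require Import all_boot all_order all_algebra.
Set Implicit Arguments. Unset Strict Implicit. Unset Printing Implicit Defensive.
Import GRing.Theory.
Local Open Scope ring_scope.

Definition is_ideal (R : finComNzRingType) (I : {set R}) : Prop :=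
  0 \in I /\ (forall x y, x \in I -> y \in I -> x + y \in I)
  /\ (forall r x, x \in I -> r * x \in I).

Definition is_maximal_ideal (R : finComNzRingType) (M : {set R}) : Prop :=
  is_ideal M /\ 1 \notin M /\
  (forall J : {set R}, is_ideal J -> M \subset J -> J = M \/ J = setT).

Definition local_with_max (R : finComNzRingType) (m : {set R}) : Prop :=
  is_maximal_ideal m /\ (forall M : {set R}, is_maximal_ideal M -> M = m).

Definition is_local_ring (R : finComNzRingType) : Prop :=
  exists m : {set R}, local_with_max m.

(* socle of a local ring = annihilator of its maximal ideal *)
Definition socle (R : finComNzRingType) (m : {set R}) : {set R} :=
  [set x | [forall y in m, x * y == 0]].

(* Finite commutative local Frobenius ring: local with maximal ideal m and
   soc(R) is isomorphic, as an R-module, to R/m, i.e. there is s with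
   soc(R) = R s and Ann(s) = m (the map r + m |-> r s is an isomorphism). *)
Definition local_frobenius_ring (R : finComNzRingType) : Prop :=
  exists m : {set R}, local_with_max m /\
    exists s : R,
      (forall t, t \in socle m <-> exists r, t = r * s) /\
      (forall r, r * s = 0 <-> r \in m).

Definition linear_code (R : finComNzRingType) (n : nat) (C : {set 'rV[R]_n}) : Prop :=
  0 \in C /\ (forall u v, u \in C -> v \in C -> u + v \in C)
  /\ (forall (a : R) v, v \in C -> a *: v \in C).

Definition free_code (R : finComNzRingType) (n : nat) (C : {set 'rV[R]_n}) : Prop :=
  exists k (B : 'M[R]_(k, n)),
    (forall i, row i B \in C) /\
    (forall c, c \in C -> exists a : 'rV[R]_k, c = a *m B) /\
    (forall a : 'rV[R]_k, a *m B = 0 -> a = 0).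

Definition codes_sum_full (R : finComNzRingType) (n : nat) (C1 C2 : {set 'rV[R]_n}) : Prop :=
  forall v : 'rV[R]_n, exists c1 c2, c1 \in C1 /\ c2 \in C2 /\ v = c1 + c2.

(* 0-DLIP: dim(C1 ∩ C2) = log_q |C1 ∩ C2| = 0, i.e. C1 ∩ C2 = {0}. *)
Definition zero_DLIP (R : finComNzRingType) (n : nat) (C1 C2 : {set 'rV[R]_n}) : Prop :=
  C1 :&: C2 = [set 0].

(* A pair with C1 + C2 = R^n and C1 :&: C2 = 0 makes C1 a direct summand of
   R^n, cut out by a projector E. Over a local ring (R, m), take a generator
   matrix B of C1 with the fewest rows: any relation c B = 0 has all its
   coefficients in m, otherwise one generator could be dropped. Writing
   E = A B, the square matrix Q = B A satisfies Q B = B, so the rows of 1 - Q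
   are relations and Q = 1 mod m. Hence det Q is a unit, Q is invertible, and
   B has no nontrivial relation at all: C1 is free with basis the rows of B. *)
From mathcomp Require Import all_boot all_order all_algebra.
Set Implicit Arguments. Unset Strict Implicit. Unset Printing Implicit Defensive.
Import GRing.Theory.
Local Open Scope ring_scope.

Section Ideals.
Variable R : finComNzRingType.
Implicit Types (I : {set R}) (x y r : R).

Definition idealb I : bool :=
  [&& 0 \in I, [forall x in I, forall y in I, x + y \in I]
    & [forall r, forall x in I, r * x \in I]].

Lemma idealP I : reflect (is_ideal I) (idealb I).
Proof.
apply: (iffP and3P) => [[I0 /'forall_in_forall_inP IA /forallP IM] | [I0 [IA IM]]].
  split; [by [] | split=> [x y Ix Iy | r x Ix]]; first exact: IA.
  exact: (forall_inP (IM r)).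
split; [by [] | apply/'forall_in_forall_inP => x y Ix Iy; exact: IA |].
by apply/forallP => r; apply/forall_inP => x; apply: IM.
Qed.

Lemma ideal_setT I : is_ideal I -> 1 \in I -> I = setT.
Proof. by move=> [_ [_ IM]] I1; apply/setP => x; rewrite inE -[x]mulr1 IM. Qed.

Lemma maximal_ideal_exists I :
  is_ideal I -> 1 \notin I -> exists M, is_maximal_ideal M /\ I \subset M.
Proof.
move=> II I1; pose P J := idealb J && (1 \notin J).
have [M /maxsetP [/andP [/idealP MI M1] maxM] IM] := @maxset_exists _ P I
  (introT andP (conj (introT (idealP I) II) I1)).
exists M; split => //; split => //; split => // J JI MJ.
have [/(ideal_setT JI) | J1] := boolP (1 \in J); [by right | left].
by apply: maxM => //; rewrite /P J1 andbT; apply/idealP.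
Qed.

Lemma ideal_mul_sub I x1 x2 y1 y2 : is_ideal I ->
  x1 - x2 \in I -> y1 - y2 \in I -> x1 * y1 - x2 * y2 \in I.
Proof.
move=> [_ [IA IM]] Ix Iy.
have -> : x1 * y1 - x2 * y2 = y1 * (x1 - x2) + x2 * (y1 - y2).
  by rewrite !mulrBr [y1 * x1]mulrC [y1 * x2]mulrC addrA subrK.
by rewrite IA ?IM.
Qed.

Lemma det_sub_in_ideal I k (M N : 'M[R]_k) : is_ideal I ->
  (forall i j, M i j - N i j \in I) -> \det M - \det N \in I.
Proof.
move=> II MN; have [I0 [IA _]] := II.
have sub_sum J (F G : _ -> R) : (forall j, F j - G j \in I) ->
    \sum_(j <- J) F j - \sum_(j <- J) G j \in I.
  move=> FG; apply: (big_ind2 (fun x y => x - y \in I)) => [|*|j _]; last exact: FG.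
    by rewrite subrr.
  by rewrite opprD addrACA IA.
apply: sub_sum => s; apply: ideal_mul_sub; first by [].
  by rewrite subrr.
apply: (big_ind2 (fun x y => x - y \in I)) => [|*|i _]; last exact: MN.
  by rewrite subrr.
exact: ideal_mul_sub.
Qed.

End Ideals.

Section LocalRing.
Variables (R : finComNzRingType) (m : {set R}).
Hypothesis local_m : local_with_max m.

Lemma ideal_max : is_ideal m.
Proof. by case: local_m => [[]]. Qed.

Lemma one_notin_max : 1 \notin m.
Proof. by case: local_m => [[_ []]]. Qed.

Lemma unit_of_notin_max x : x \notin m -> exists u, u * x = 1.
Proof.
move=> xm; have [/existsP [u /eqP ux] | noinv] := boolP [exists u, u * x == 1].
  by exists u.
pose Rx := [set r * x | r : R].
have Rx_ideal : is_ideal Rx.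
  split; [|split].
  - by apply/imsetP; exists 0; rewrite ?mul0r.
  - move=> _ _ /imsetP [r _ ->] /imsetP [s _ ->].
    by apply/imsetP; exists (r + s); rewrite ?mulrDl.
  - by move=> r _ /imsetP [s _ ->]; apply/imsetP; exists (r * s); rewrite ?mulrA.
have Rx1 : 1 \notin Rx.
  by apply/imsetP => -[u _ ux]; move/existsP: noinv; apply; exists u; rewrite -ux.
have [M [maxM RxM]] := maximal_ideal_exists Rx_ideal Rx1.
move: xm; rewrite -(local_m.2 M maxM) (subsetP RxM) //.
by apply/imsetP; exists 1; rewrite ?mul1r.
Qed.

Lemma det_unit_of_congr1 k (Q : 'M[R]_k) :
  (forall i j, (1%:M - Q) i j \in m) -> exists u, u * \det Q = 1.
Proof.
move=> Q1; apply: unit_of_notin_max; apply: contraNN one_notin_max => detQm.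
have det1Q : \det (1%:M : 'M[R]_k) - \det Q \in m.
  by apply: det_sub_in_ideal ideal_max _ => i j; have := Q1 i j; rewrite !mxE.
by rewrite -(det1 R k) -[\det 1%:M](subrK (\det Q)); case: ideal_max => [_ []] ->.
Qed.

End LocalRing.

Lemma mulmx_det_unit_eq0 (R : comPzRingType) k (Q : 'M[R]_k) u (x : 'rV_k) :
  u * \det Q = 1 -> x *m Q = 0 -> x = 0.
Proof.
move=> uQ xQ; have QV : Q *m (u *: \adj Q) = 1%:M.
  by rewrite -scalemxAr mul_mx_adj scale_scalar_mx uQ.
by rewrite -[x]mulmx1 -QV mulmxA xQ mul0mx.
Qed.

Lemma mulmx_col'_row' (R : pzSemiRingType) k n (i : 'I_k) (d : 'rV[R]_k)
    (B : 'M_(k, n)) :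
  d 0 i = 0 -> d *m B = col' i d *m row' i B.
Proof.
move=> di0; apply/rowP => j; rewrite !mxE (bigD1_ord i) //= di0 mul0r add0r.
by apply: eq_bigr => l _; rewrite !mxE.
Qed.

Section Codes.
Variables (R : finComNzRingType) (n : nat).
Implicit Types (C : {set 'rV[R]_n}) (u v : 'rV[R]_n).

Lemma code_opp C v : linear_code C -> v \in C -> - v \in C.
Proof. by move=> [_ [_ CZ]] Cv; rewrite -scaleN1r CZ. Qed.

Lemma code_sub C u v : linear_code C -> u \in C -> v \in C -> u - v \in C.
Proof. by move=> CC Cu Cv; case: (CC) => [_ [CA _]]; rewrite CA ?code_opp. Qed.

Lemma code_mulmx C k (a : 'rV[R]_k) (B : 'M_(k, n)) :
  linear_code C -> (forall i, row i B \in C) -> a *m B \in C.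
Proof.
move=> [C0 [CA CZ]] CB; rewrite mulmx_sum_row.
by apply: (big_ind (fun x => x \in C)) => // i _; rewrite CZ.
Qed.

Lemma codes_sum_fullC C1 C2 : codes_sum_full C1 C2 -> codes_sum_full C2 C1.
Proof.
by move=> full v; have [c1 [c2 [? [? ->]]]] := full v; exists c2, c1; rewrite addrC.
Qed.

Lemma zero_DLIPC C1 C2 : zero_DLIP C1 C2 -> zero_DLIP C2 C1.
Proof. by rewrite /zero_DLIP setIC. Qed.

Lemma projector_of_complement C1 C2 :
  linear_code C1 -> linear_code C2 -> codes_sum_full C1 C2 -> zero_DLIP C1 C2 ->
  exists E : 'M[R]_n, (forall i, row i E \in C1) /\ (forall c, c \in C1 -> c *m E = c).
Proof.
move=> CC1 CC2 full C12.
have [f Hf] : exists f : 'I_n -> 'rV[R]_n,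
    forall i, f i \in C1 /\ row i 1%:M - f i \in C2.
  apply: (@fin_all_exists _ (fun=> 'rV[R]_n)
    (fun i f => f \in C1 /\ row i 1%:M - f \in C2)) => i.
  have [c1 [c2 [C1c1 [C2c2 ->]]]] := full (row i 1%:M).
  by exists c1; rewrite addrC addKr.
pose E := \matrix_(i, j) f i 0 j.
have rowE i : row i E = f i by apply/rowP => j; rewrite !mxE.
have E_C1 i : row i E \in C1 by rewrite rowE; case: (Hf i).
exists E; split => // c C1c; apply/eqP; rewrite -subr_eq0 -in_set1 -C12 inE.
rewrite code_sub ?code_mulmx //= -opprB code_opp //.
have -> : c - c *m E = c *m (1%:M - E) by rewrite mulmxBr mulmx1.
by apply: code_mulmx => // i; rewrite linearB /= rowE; case: (Hf i).
Qed.

Definition generates k (B : 'M[R]_(k, n)) C : bool :=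
  [forall i, row i B \in C] && [forall c in C, exists a : 'rV_k, c == a *m B].

Lemma generatesP k (B : 'M[R]_(k, n)) C :
  reflect ((forall i, row i B \in C) /\ (forall c, c \in C -> exists a, c = a *m B))
          (generates B C).
Proof.
apply: (iffP andP) => [[/forallP BC /forall_inP CB] | [BC CB]]; split => //.
- by move=> c /CB /existsP [a /eqP ->]; exists a.
- exact/forallP.
- by apply/forall_inP => c /CB [a ->]; apply/existsP; exists a.
Qed.

Lemma generates_mulmx k p (B : 'M[R]_(k, n)) (M : 'M_(p, n)) C :
  generates B C -> (forall i, row i M \in C) -> exists A, M = A *m B.
Proof.
move=> /generatesP [_ CB] MC.
have [a Ha] : exists a : 'I_p -> 'rV_k, forall i, row i M = a i *m B.
  apply: (@fin_all_exists _ (fun=> 'rV_k) (fun i a => row i M = a *m B)) => i.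
  exact: CB.
exists (\matrix_(i, j) a i 0 j); apply/row_matrixP => i.
by rewrite row_mul Ha; congr (_ *m _); apply/rowP => j; rewrite !mxE.
Qed.

Lemma generates_row' k (B : 'M[R]_(k, n)) C (c : 'rV_k) (i : 'I_k) (u : R) :
  generates B C -> c *m B = 0 -> u * c 0 i = 1 -> generates (row' i B) C.
Proof.
move=> /generatesP [BC CB] cB0 uc; apply/generatesP; split.
  by move=> j; rewrite (_ : row j _ = row (lift i j) B) //; apply/rowP => l; rewrite !mxE.
move=> x /CB [a ->]; pose d := a - (a 0 i * u) *: c.
have di0 : d 0 i = 0 by rewrite !mxE -mulrA uc mulr1 subrr.
exists (col' i d); rewrite -mulmx_col'_row' // mulmxBl -scalemxAl cB0.
by rewrite scaler0 subr0.
Qed.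

End Codes.

Section FreeSummand.
Variables (R : finComNzRingType) (m : {set R}) (n : nat).
Hypothesis local_m : local_with_max m.
Implicit Types C : {set 'rV[R]_n}.

Lemma minimal_generator_relation_in_max k (B : 'M[R]_(k, n)) C (c : 'rV_k) :
  generates B C -> (forall k' (B' : 'M_(k', n)), generates B' C -> (k <= k')%N) ->
  c *m B = 0 -> forall i, c 0 i \in m.
Proof.
move=> genB minB cB0 i; apply: contraT => /(unit_of_notin_max local_m) [u uc].
have := minB _ _ (generates_row' genB cB0 uc).
by rewrite leqNgt ltn_predL (leq_ltn_trans (leq0n i) (ltn_ord i)).
Qed.

Lemma free_of_projector C (E : 'M[R]_n) :
  (forall i, row i E \in C) -> (forall c, c \in C -> c *m E = c) -> free_code C.
Proof.
move=> EC Efix.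
have genE : generates E C by apply/generatesP; split => // c /Efix <-; exists c.
pose P k := [exists B : 'M[R]_(k, n), generates B C].
have exP : exists k, P k by exists n; apply/existsP; exists E.
case: (ex_minnP exP) => k /existsP [B genB] minB.
have min_k k' (B' : 'M_(k', n)) : generates B' C -> (k <= k')%N.
  by move=> genB'; apply: minB; apply/existsP; exists B'.
have [BC CB] := generatesP _ _ genB.
have [A EAB] := generates_mulmx genB EC.
pose Q := B *m A.
have QB : Q *m B = B.
  by apply/row_matrixP => i; rewrite -mulmxA -EAB row_mul Efix.
have Q1 i j : (1%:M - Q) i j \in m.
  have rel : row i (1%:M - Q) *m B = 0.
    by rewrite -row_mul mulmxBl mul1mx QB subrr linear0.
  by have := minimal_generator_relation_in_max genB min_k rel j; rewrite mxE.
have [u uQ] := det_unit_of_congr1 local_m Q1.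
exists k, B; split => //; split => // a aB0.
by apply: (mulmx_det_unit_eq0 uQ); rewrite mulmxA aB0 mul0mx.
Qed.

Lemma complemented_code_free C1 C2 :
  linear_code C1 -> linear_code C2 -> codes_sum_full C1 C2 -> zero_DLIP C1 C2 ->
  free_code C1.
Proof.
move=> CC1 CC2 full C12.
have [E [EC Efix]] := projector_of_complement CC1 CC2 full C12.
exact: free_of_projector EC Efix.
Qed.

End FreeSummand.

Theorem corollary3p17 (R : finComNzRingType) (n : nat) (C1 C2 : {set 'rV[R]_n}) :
  local_frobenius_ring R ->
  linear_code C1 -> linear_code C2 ->
  codes_sum_full C1 C2 ->
  zero_DLIP C1 C2 ->
  free_code C1 /\ free_code C2.
Proof.
move=> [m [local_m _]] CC1 CC2 full C12; split.
  exact: (complemented_code_free local_m CC1 CC2 full C12).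
exact: (complemented_code_free local_m CC2 CC1 (codes_sum_fullC full) (zero_DLIPC C12)).
Qed.
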